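(* Let $\chi,\psi$ be central characters of $U(\mathfrak{gl}_t)$ and suppose $$\chi(u)-\psi(u)=\sum_{i=1}^re^{b_iu}-\sum_{j=1}^se^{(c_j-1)u}$$ for some $b_1,\ldots,b_r,c_1,\ldots,c_s\in\mathbb C$. Then there exist central characters $\chi^{(n)},\psi^{(n)}$ of $U(\mathfrak{gl}_n(\Bbbk))$ with $\chi=\prod_{\mathcal F}\chi^{(n)}$ and $\psi=\prod_{\mathcal F}\psi^{(n)}$ such that for every $n>r+s$ there is a weight $\lambda^{(n)}\in\Bbbk^n$ with $U(\mathfrak{gl}_n(\Bbbk))$ acting on $M_{\lambda^{(n)}}$ by the central character $\chi^{(n)}$ and acting on $M_{\mu^{(n)}}$ by $\psi^{(n)}$, where $\mu^{(n)}=\lambda^{(n)}-e_1-\cdots-e_r+e_{n-s+1}+\cdots+e_n$.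
   Context: $\Bbbk=\overline{\mathbb Q}$; $\mathcal F$ is a fixed nonprincipal ultrafilter on $\mathbb N$ with a fixed field isomorphism $\prod_{\mathcal F}\Bbbk\simeq\mathbb C$, and $t$ is the image of $\prod_{\mathcal F}n$. $e_i$ is the $i$-th standard basis vector of $\Bbbk^n$. For $\mathfrak{gl}_n(\Bbbk)$, $M_\lambda=U(\mathfrak{gl}_n)\otimes_{U(\mathfrak b)}\Bbbk_{\lambda-\rho}$ ($\mathfrak b$ upper triangular Borel, $\rho$ half-sum of positive roots) and $C_k$ ($k\ge1$) is the central element acting on every $M_\lambda$ by $\sum_i\lambda_i^k$. In $U(\mathfrak{gl}_t)$ (universal enveloping algebra of $\mathfrak{gl}_t=V\otimes V^*$ in Deligne's category $\operatorname{Rep}(GL_t)$, realized as an ultraproduct of the $U(\mathfrak{gl}_n(\Bbbk))$), $C_k=\prod_{\mathcal F}C_k$ and $Z(U(\mathfrak{gl}_t))=\mathbb C[C_1,C_2,\ldots]$; a central character is determined by arbitrary values $\psi_k=\psi(C_k)$, and $\psi=\prod_{\mathcal F}\psi^{(n)}$ means $\psi_k=\prod_{\mathcal F}\psi^{(n)}(C_k)$ for all $k$. Generating function: $\psi(u)=\frac{1}{e^u-1}\sum_{k\ge0}\frac{\psi_k}{k!}u^k$, $\psi_0:=1$ (formal factor); so the hypothesis means $\chi_k-\psi_k=\sum_i((b_i+1)^k-b_i^k)+\sum_j((c_j-1)^k-c_j^k)$ for all $k\ge1$. *)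

From mathcomp Require Import all_boot all_order all_algebra all_field.
Set Implicit Arguments. Unset Strict Implicit. Unset Printing Implicit Defensive.
Import GRing.Theory Num.Theory.
Local Open Scope ring_scope.

(* The field k = Qbar is MathComp's algC (algebraic closure of rat). *)

Definition is_ultrafilter (F : (nat -> Prop) -> Prop) : Prop :=
  [/\ F (fun _ => True),
      ~ F (fun _ => False),
      (forall A B : nat -> Prop, F A -> F B -> F (fun n => A n /\ B n)),
      (forall A B : nat -> Prop, F A -> (forall n, A n -> B n) -> F B)
    & (forall A : nat -> Prop, F A \/ F (fun n => ~ A n))].

Definition nonprincipal (F : (nat -> Prop) -> Prop) : Prop :=
  forall m : nat, ~ F (fun n => n = m).

(* Elements of C = prod_F k are represented by sequences nat -> algC;
   two representatives denote the same element iff they agree F-a.e. *)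
Definition ueq (F : (nat -> Prop) -> Prop) (x y : nat -> algC) : Prop :=
  F (fun n => x n = y n).

(* C_k acts on the Verma module M_lambda by sum_i lambda_i^k; a function
   f : nat -> algC (k |-> value on C_k) is the central character by which
   U(gl_n) acts on M_lambda. *)
Definition acts_on_verma (n : nat) (lam : 'I_n -> algC) (f : nat -> algC) : Prop :=
  forall k : nat, (0 < k)%N -> f k = \sum_(i < n) lam i ^+ k.

(* Central characters of U(gl_n(k)), recorded by their values on C_k (k>=1),
   via the Harish-Chandra parametrization: they are exactly the characters
   by which U(gl_n) acts on some Verma module M_nu. *)
Definition central_char_gl (n : nat) (f : nat -> algC) : Prop :=
  exists nu : 'I_n -> algC, acts_on_verma nu f.

(* mu = lambda - e_1 - ... - e_r + e_{n-s+1} + ... + e_n  (0-indexed) *)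
Definition shift_weight (n r s : nat) (lam : 'I_n -> algC) : 'I_n -> algC :=
  fun i => lam i - (if (i < r)%N then 1 else 0) + (if (n - s <= i)%N then 1 else 0).

From mathcomp Require Import all_boot all_order all_algebra all_field.
From mathcomp Require Import zify ring.
Import GRing.Theory Num.Theory.
Local Open Scope ring_scope.

(* Put [b_i + 1] in the first [r] coordinates of [lambda] and [c_j - 1] in the
   last [s]; the shift [mu] then carries [b_i] and [c_j] there, so the hypothesis
   says exactly that [p_k(lambda) - p_k(mu) = chi_k - psi_k] for the power sums
   [p_k].  The [m = n - r - s] middle coordinates are chosen so that
   [p_k(lambda) = chi_k] for every [k <= sqrt m]: for [d = 1, 2, ...] append a
   scaled orbit of a primitive [d]-th root of unity, which adjusts [p_d] without
   touching [p_1, ..., p_(d-1)], and pad with zeros.  A fixed [k] is thus handled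
   for all but finitely many [n], and cofinite sets lie in a nonprincipal
   ultrafilter. *)

Definition power_sum {R : pzSemiRingType} (s : seq R) (k : nat) : R :=
  \sum_(x <- s) x ^+ k.

Lemma power_sum_cat {R : pzSemiRingType} (s1 s2 : seq R) k :
  power_sum (s1 ++ s2) k = power_sum s1 k + power_sum s2 k.
Proof. exact: big_cat. Qed.

Lemma power_sum_nseq0 {R : pzSemiRingType} (m k : nat) :
  (0 < k)%N -> power_sum (nseq m (0 : R)) k = 0.
Proof.
by move=> k_gt0; rewrite /power_sum big_nseq expr0n eqn0Ngt k_gt0 iter_addr_0 mul0rn.
Qed.

Lemma power_sum_mkseq {R : pzSemiRingType} (f : nat -> R) (n k : nat) :
  power_sum (mkseq f n) k = \sum_(j < n) f j ^+ k.
Proof. by rewrite /power_sum big_map -(subn0 n) big_mkord subn0. Qed.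

Lemma power_sum_prim_root_orbit (R : idomainType) (d k : nat) (z t : R) :
  d.-primitive_root z ->
  power_sum (mkseq (fun j => t * z ^+ j) d) k
    = if (d %| k)%N then t ^+ k *+ d else 0.
Proof.
move=> prim_z; rewrite power_sum_mkseq.
under eq_bigr do rewrite exprMn -exprM mulnC exprM.
rewrite -mulr_sumr (prim_order_dvd prim_z).
have [zk1 | zk_neq1] := eqVneq (z ^+ k) 1.
  by under eq_bigr do rewrite zk1 expr1n; rewrite sumr_const card_ord mulr_natr.
have : (z ^+ k) ^+ d - 1 = 0.
  by rewrite -exprM mulnC exprM (prim_expr_order prim_z) expr1n subrr.
rewrite subrX1 => /eqP; rewrite mulf_eq0 subr_eq0 (negPf zk_neq1) /=.
by move/eqP->; rewrite mulr0.
Qed.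

Definition root_block (n : nat) (c : algC) : seq algC :=
  let z := sval (C_prim_root_exists (ltn0Sn n)) in
  mkseq (fun j => n.+1.-root (c / n.+1%:R) * z ^+ j) n.+1.

Lemma size_root_block n c : size (root_block n c) = n.+1.
Proof. exact: size_mkseq. Qed.

Lemma power_sum_root_block n c k : (0 < k <= n.+1)%N ->
  power_sum (root_block n c) k = if k == n.+1 then c else 0.
Proof.
case/andP=> k_gt0 k_le; rewrite power_sum_prim_root_orbit; last first.
  exact: svalP (C_prim_root_exists (ltn0Sn n)).
have [-> | k_neq] := eqVneq k n.+1.
  by rewrite dvdnn rootCK // -mulr_natr divfK // pnatr_eq0.
by rewrite gtnNdvd // ltn_neqAle k_neq.
Qed.

Fixpoint solve_power_sums (a : nat -> algC) (K : nat) : seq algC :=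
  if K is K'.+1 then
    let L := solve_power_sums a K' in L ++ root_block K' (a K - power_sum L K)
  else [::].

Lemma size_solve_power_sums a K : (size (solve_power_sums a K) <= K * K)%N.
Proof. by elim: K => [|K IH] //=; rewrite size_cat size_root_block; nia. Qed.

Lemma power_sum_solve_power_sums a K k : (0 < k <= K)%N ->
  power_sum (solve_power_sums a K) k = a k.
Proof.
elim: K => [|K IH] /andP[k_gt0 k_le]; first by case: k k_gt0 k_le.
rewrite /= power_sum_cat power_sum_root_block ?k_gt0 //.
have [-> | k_neq] := eqVneq k K.+1; first by rewrite addrC subrK.
by rewrite addr0 IH // k_gt0 -ltnS ltn_neqAle k_neq.
Qed.

Definition isqrt (m : nat) : nat := \max_(k < m.+1 | (k * k <= m)%N) k.

Lemma isqrt_sqr_le m : (isqrt m * isqrt m <= m)%N.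
Proof.
apply: (big_ind (fun x => x * x <= m)%N) => [//|x y|//].
by rewrite /maxn; case: ifP.
Qed.

Lemma leq_isqrt m k : (k * k <= m)%N -> (k <= isqrt m)%N.
Proof.
move=> kk_le; have k_lt : (k < m.+1)%N by rewrite ltnS; nia.
exact: (leq_bigmax_cond (Ordinal k_lt)).
Qed.

Definition pad_power_sums (a : nat -> algC) (m : nat) : seq algC :=
  let L := solve_power_sums a (isqrt m) in L ++ nseq (m - size L) 0.

Lemma size_pad_power_sums a m : size (pad_power_sums a m) = m.
Proof.
have := leq_trans (size_solve_power_sums a (isqrt m)) (isqrt_sqr_le m).
by rewrite size_cat size_nseq => /subnKC.
Qed.

Lemma power_sum_pad_power_sums a m k : (0 < k)%N -> (k * k <= m)%N ->
  power_sum (pad_power_sums a m) k = a k.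
Proof.
move=> k_gt0 kk_le; rewrite power_sum_cat power_sum_nseq0 // addr0.
by rewrite power_sum_solve_power_sums // k_gt0 leq_isqrt.
Qed.

Lemma sum_nth_power {R : pzSemiRingType} (n k : nat) (S : seq R) :
  size S = n -> \sum_(i < n) nth 0 S i ^+ k = power_sum S k.
Proof. by move=> <-; rewrite /power_sum (big_nth 0) big_mkord. Qed.

Lemma shift_weight_cat n (B M C : seq algC) (i : 'I_n) :
  (size B + size M + size C)%N = n ->
  shift_weight (size B) (size C)
    (fun j : 'I_n => nth 0 ([seq x + 1 | x <- B] ++ M ++ [seq x - 1 | x <- C]) j) i
  = nth 0 (B ++ M ++ C) i.
Proof.
case: i => i /= i_lt size_n; rewrite /shift_weight /= !nth_cat !size_map.
case: (ltnP i (size B)) => [iB | Bi].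
  have -> : (n - size C <= i)%N = false by lia.
  by rewrite (nth_map 0) // addrK addr0.
case: (ltnP (i - size B) (size M)) => [iM | Mi].
  have -> : (n - size C <= i)%N = false by lia.
  by rewrite subr0 addr0.
have -> : (n - size C <= i)%N = true by lia.
have iC : (i - size B - size M < size C)%N by lia.
by rewrite (nth_map 0 _ _ iC) subr0 subrK.
Qed.

Section MatchingWeight.

Variables (r s n : nat) (b : 'I_r -> algC) (c : 'I_s -> algC) (chi : nat -> algC).

Let B := [seq b i | i <- enum 'I_r].
Let C := [seq c j | j <- enum 'I_s].
Let raised := [seq x + 1 | x <- B].
Let lowered := [seq x - 1 | x <- C].
Let middle :=
  pad_power_sums (fun k => chi k - power_sum raised k - power_sum lowered k) (n - r - s).

Definition matching_weight (i : 'I_n) : algC := nth 0 (raised ++ middle ++ lowered) i.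

Hypothesis rs_le_n : (r + s <= n)%N.

Let size_B : size B = r. Proof. by rewrite size_map size_enum_ord. Qed.
Let size_C : size C = s. Proof. by rewrite size_map size_enum_ord. Qed.
Let size_weight : (size B + size middle + size C)%N = n.
Proof. by rewrite size_pad_power_sums size_B size_C; lia. Qed.

Lemma sum_matching_weight k : (0 < k)%N -> (k * k <= n - r - s)%N ->
  \sum_(i < n) matching_weight i ^+ k = chi k.
Proof.
move=> k_gt0 kk_le; rewrite sum_nth_power; last first.
  by rewrite -size_weight !size_cat /raised /lowered !size_map addnA.
by rewrite 2!power_sum_cat /middle power_sum_pad_power_sums //; ring.
Qed.

Lemma sum_shift_matching_weight k : (0 < k)%N -> (k * k <= n - r - s)%N ->
  \sum_(i < n) shift_weight r s matching_weight i ^+ k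
  = chi k - (\sum_(i < r) ((b i + 1) ^+ k - b i ^+ k)
             + \sum_(j < s) ((c j - 1) ^+ k - c j ^+ k)).
Proof.
move=> k_gt0 kk_le; rewrite -{1}size_B -{1}size_C.
under eq_bigr do rewrite shift_weight_cat //.
rewrite sum_nth_power; last by rewrite -size_weight !size_cat addnA.
rewrite 2!power_sum_cat /middle power_sum_pad_power_sums //.
rewrite /raised /lowered /B /C /power_sum !big_map -!enumT !big_enum !sumrB; ring.
Qed.

End MatchingWeight.

Lemma nonprincipal_ultrafilter_ge {F : (nat -> Prop) -> Prop} :
  is_ultrafilter F -> nonprincipal F -> forall N, F (fun n => (N <= n)%N).
Proof.
case=> F_true _ F_and F_mono F_ult F_np; elim=> [|N IH].
  exact: F_mono F_true _.
have F_neqN : F (fun n => n <> N) by case: (F_ult (fun n => n = N)) => // /F_np.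
apply: F_mono (F_and _ _ IH F_neqN) _ => n [N_le_n n_neqN].
by rewrite ltn_neqAle N_le_n andbT eq_sym; apply/eqP.
Qed.

Theorem corollary10
  (F : (nat -> Prop) -> Prop) (HF : is_ultrafilter F) (HFnp : nonprincipal F)
  (chi psi : nat -> nat -> algC) (* chi k = representative of chi(C_k) in C *)
  (r s : nat) (b : 'I_r -> nat -> algC) (c : 'I_s -> nat -> algC)
  (Hyp : forall k : nat, (0 < k)%N ->
     ueq F (fun n => chi k n - psi k n)
           (fun n => \sum_(i < r) ((b i n + 1) ^+ k - b i n ^+ k)
                   + \sum_(j < s) ((c j n - 1) ^+ k - c j n ^+ k))) :
  exists chin psin : nat -> nat -> algC,
    [/\ forall n, central_char_gl n (chin n),
        forall n, central_char_gl n (psin n),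
        forall k, (0 < k)%N -> ueq F (chi k) (fun n => chin n k),
        forall k, (0 < k)%N -> ueq F (psi k) (fun n => psin n k)
      & forall n : nat, (r + s < n)%N ->
          exists lam : 'I_n -> algC,
            acts_on_verma lam (chin n) /\
            acts_on_verma (shift_weight r s lam) (psin n)].
Proof.
pose lam n := matching_weight r s n (b^~ n) (c^~ n) (chi^~ n).
exists (fun n k => \sum_(i < n) lam n i ^+ k),
       (fun n k => \sum_(i < n) shift_weight r s (lam n) i ^+ k).
have [_ _ F_and F_mono _] := HF.
have large_n k : F (fun n => (r + s <= n)%N /\ (k * k <= n - r - s)%N).
  apply: F_mono (nonprincipal_ultrafilter_ge HF HFnp (r + s + k * k)) _ => n.
  by split; lia.
split=> [n | n | k k_gt0 | k k_gt0 | n _].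
- by exists (lam n).
- by exists (shift_weight r s (lam n)).
- apply: F_mono (large_n k) _ => n [rs_le kk_le].
  by rewrite sum_matching_weight.
- apply: F_mono (F_and _ _ (large_n k) (Hyp k k_gt0)) _.
  move=> n [[rs_le kk_le] chi_psi_diff].
  by rewrite sum_shift_matching_weight // -chi_psi_diff opprB addrC subrK.
- by exists (lam n).
Qed.
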